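(* Let $r>0$, $\mathbf{c}=(c_1,c_2,\dots,c_n)\in\mathbb{R}^n_{\ge0}$ and $\mathbf{c}'=(c_1,0,\dots,0)$. Then $$\mathrm{Vol}\big(C(\mathbf{0},1)\cap C(\mathbf{c},r)\big)\le \mathrm{Vol}\big(C(\mathbf{0},1)\cap C(\mathbf{c}',r)\big).$$
   Context: For $\mathbf{c}\in\mathbb{R}^n$, $r\ge 0$, $C(\mathbf{c},r)=\{\mathbf{x}\in\mathbb{R}^n:\|\mathbf{x}-\mathbf{c}\|_1\le r\}$. *)

(* classical reals.  Points of R^n are functions nat -> R of which
   only the coordinates 0..n-1 are relevant (coordinate i here = c_{i+1} in the paper). *)
From Stdlib Require Import Reals.
Open Scope R_scope.

Fixpoint sumR (n : nat) (f : nat -> R) : R :=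
  match n with O => 0 | S m => sumR m f + f m end.

Fixpoint prodR (n : nat) (f : nat -> R) : R :=
  match n with O => 1 | S m => prodR m f * f m end.

Definition norm1 (n : nat) (x : nat -> R) : R := sumR n (fun i => Rabs (x i)).

Definition l1ball (n : nat) (c : nat -> R) (r : R) : (nat -> R) -> Prop :=
  fun x => norm1 n (fun i => x i - c i) <= r.

Definition origin : nat -> R := fun _ => 0.

Definition in_box (n : nat) (a b : nat -> R) (x : nat -> R) : Prop :=
  forall i, (i < n)%nat -> a i <= x i <= b i.
Definition box_vol (n : nat) (a b : nat -> R) : R := prodR n (fun i => b i - a i).

Definition box_cover_sum (n : nat) (S : (nat -> R) -> Prop) (s : R) : Prop :=
  exists a b : nat -> nat -> R,
    (forall j i, (i < n)%nat -> a j i <= b j i) /\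
    (forall x, S x -> exists j, in_box n (a j) (b j) x) /\
    infinite_sum (fun j => box_vol n (a j) (b j)) s.

(* v = Vol(S): the Lebesgue (outer) measure of S, i.e. the infimum of the
   total volumes of countable box covers of S. *)
Definition is_volume (n : nat) (S : (nat -> R) -> Prop) (v : R) : Prop :=
  (forall s, box_cover_sum n S s -> v <= s) /\
  (forall w, (forall s, box_cover_sum n S s -> w <= s) -> w <= v).

From Stdlib Require Import Reals Lra Lia FunctionalExtensionality ClassicalEpsilon Classical PropExtensionality.
Open Scope R_scope.

(* The theorem follows by
   replacing the coordinates c_2, ..., c_n of the centre by 0 one at a time, each step not
   decreasing Vol (C(0,1) ∩ C(c,r)).  For the step at coordinate k, reflect in the hyperplane
   x_k = c_k/2: the reflection exchanges the centres 0 and c_k e_k, and the centres c and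
   c - c_k e_k.  Let A = C(0,1) ∩ C(c,r) and D = C(0,1) ∩ C(c - c_k e_k, r).  The half of A below
   the hyperplane and the reflection of the half above it both lie in the lower half of D, and
   their intersection is reflected into the upper half of D; inclusion-exclusion, which needs
   the Caratheodory measurability of l1-balls, gives Vol A <= Vol D. *)

Definition sumR_but (n k : nat) (f : nat -> R) : R := sumR n (fun i => if Nat.eqb i k then 0 else f i).
Definition prodR_but (n k : nat) (f : nat -> R) : R := prodR n (fun i => if Nat.eqb i k then 1 else f i).

Lemma sumR_ext n f g : (forall i, (i < n)%nat -> f i = g i) -> sumR n f = sumR n g.
Proof. induction n; simpl; intros H; auto. rewrite IHn, H by (auto; lia); auto. Qed.

Lemma sumR_le n f g : (forall i, (i < n)%nat -> f i <= g i) -> sumR n f <= sumR n g.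
Proof.
  induction n; simpl; intros H; [lra|].
  specialize (IHn ltac:(intros; apply H; lia)). specialize (H n ltac:(lia)). lra.
Qed.

Lemma sumR_plus n f g : sumR n (fun i => f i + g i) = sumR n f + sumR n g.
Proof. induction n; simpl; lra. Qed.

Lemma sumR_scal n a f : sumR n (fun i => a * f i) = a * sumR n f.
Proof. induction n; simpl; lra. Qed.

Lemma sumR_const n a : sumR n (fun _ => a) = INR n * a.
Proof. induction n; simpl sumR; [simpl; lra|]. rewrite IHn, S_INR. lra. Qed.

Lemma sumR_nonneg n f : (forall i, (i < n)%nat -> 0 <= f i) -> 0 <= sumR n f.
Proof. intros H. rewrite <- (Rmult_0_r (INR n)), <- sumR_const. apply sumR_le, H. Qed.

Lemma sumR_app a b f : sumR (a + b) f = sumR a f + sumR b (fun i => f (a + i)%nat).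
Proof. induction b; simpl; [rewrite Nat.add_0_r; lra|]. rewrite Nat.add_succ_r. simpl. lra. Qed.

Lemma sumR_le_length a b f : (forall i, 0 <= f i) -> (a <= b)%nat -> sumR a f <= sumR b f.
Proof.
  intros H Hab. replace b with (a + (b - a))%nat by lia. rewrite sumR_app.
  assert (0 <= sumR (b - a) (fun i => f (a + i)%nat)) by (apply sumR_nonneg; auto). lra.
Qed.

Lemma sumR_ge_term n f i : (forall j, (j < n)%nat -> 0 <= f j) -> (i < n)%nat -> f i <= sumR n f.
Proof.
  intros H Hi. replace n with (S i + (n - S i))%nat by lia. rewrite sumR_app. simpl.
  assert (0 <= sumR i f) by (apply sumR_nonneg; intros; apply H; lia).
  assert (0 <= sumR (n - S i) (fun j => f (S (i + j)))) by (apply sumR_nonneg; intros; apply H; lia).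
  lra.
Qed.

Lemma sumR_extract n k f : (k < n)%nat -> sumR n f = f k + sumR_but n k f.
Proof.
  unfold sumR_but. induction n; intros Hk; [lia|]. simpl. destruct (Nat.eq_dec k n).
  - subst. rewrite Nat.eqb_refl, (sumR_ext n (fun i => if Nat.eqb i n then 0 else f i) f); [lra|].
    intros i Hi. destruct (Nat.eqb_spec i n); [lia|auto].
  - rewrite IHn by lia. destruct (Nat.eqb_spec n k); [lia|]. lra.
Qed.

Lemma sumR_but_le n k f g : (forall i, (i < n)%nat -> i <> k -> f i <= g i) -> sumR_but n k f <= sumR_but n k g.
Proof. intros H. apply sumR_le. intros i Hi. destruct (Nat.eqb_spec i k); [lra|auto]. Qed.

Lemma sumR_but_plus n k f g : sumR_but n k (fun i => f i + g i) = sumR_but n k f + sumR_but n k g.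
Proof. unfold sumR_but. rewrite <- sumR_plus. apply sumR_ext. intros i _. destruct (Nat.eqb i k); lra. Qed.

Lemma sumR_but_nonneg n k f : (forall i, (i < n)%nat -> i <> k -> 0 <= f i) -> 0 <= sumR_but n k f.
Proof. intros H. apply sumR_nonneg. intros i Hi. destruct (Nat.eqb_spec i k); [lra|auto]. Qed.

Lemma sumR_but_le_const n k M f : (k < n)%nat -> 0 <= M -> (forall i, (i < n)%nat -> f i <= M) ->
  sumR_but n k f <= INR (n - 1) * M.
Proof.
  intros Hk HM Hf.
  pose proof (sumR_extract n k (fun i => if Nat.eqb i k then M else f i) Hk) as E. cbv beta in E.
  rewrite Nat.eqb_refl in E.
  assert (sumR n (fun i => if Nat.eqb i k then M else f i) <= INR n * M).
  { rewrite <- sumR_const. apply sumR_le. intros i Hi. destruct (Nat.eqb i k); auto; lra. }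
  replace (sumR_but n k (fun i => if Nat.eqb i k then M else f i)) with (sumR_but n k f) in E
    by (apply sumR_ext; intros i _; destruct (Nat.eqb i k); auto).
  rewrite minus_INR by lia. simpl INR. lra.
Qed.

Lemma sumR_div_mod J T g : (T <> 0)%nat ->
  sumR (J * T) (fun k => g (k / T)%nat (k mod T)%nat) = sumR J (fun j => sumR T (g j)).
Proof.
  intros HT. induction J; [reflexivity|].
  replace (S J * T)%nat with (J * T + T)%nat by lia. rewrite sumR_app, IHJ. simpl.
  f_equal. apply sumR_ext. intros i Hi. rewrite (Nat.div_add_l J T i HT), Nat.div_small by auto.
  rewrite Nat.add_0_r, Nat.add_comm, Nat.Div0.mod_add, Nat.mod_small; auto.
Qed.

Lemma block_index_div j T m : (m < T)%nat -> ((j * T + m) / T)%nat = j.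
Proof. intros H. rewrite Nat.div_add_l, Nat.div_small by lia. lia. Qed.

Lemma block_index_mod j T m : (m < T)%nat -> ((j * T + m) mod T)%nat = m.
Proof. intros H. rewrite Nat.add_comm, Nat.Div0.mod_add. apply Nat.mod_small; auto. Qed.

Lemma prodR_ext n f g : (forall i, (i < n)%nat -> f i = g i) -> prodR n f = prodR n g.
Proof. induction n; simpl; intros H; auto. rewrite IHn, H by (auto; lia); auto. Qed.

Lemma prodR_nonneg n f : (forall i, (i < n)%nat -> 0 <= f i) -> 0 <= prodR n f.
Proof.
  induction n; simpl; intros H; [lra|].
  apply Rmult_le_pos; [apply IHn; intros; apply H; lia | apply H; lia].
Qed.

Lemma prodR_0 n : (0 < n)%nat -> prodR n (fun _ => 0) = 0.
Proof. destruct n; intros; [lia|]. simpl; lra. Qed.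

Lemma prodR_extract n k f : (k < n)%nat -> prodR n f = f k * prodR_but n k f.
Proof.
  unfold prodR_but. induction n; intros Hk; [lia|]. simpl. destruct (Nat.eq_dec k n).
  - subst. rewrite Nat.eqb_refl, (prodR_ext n (fun i => if Nat.eqb i n then 1 else f i) f); [lra|].
    intros i Hi. destruct (Nat.eqb_spec i n); [lia|auto].
  - rewrite IHn by lia. destruct (Nat.eqb_spec n k); [lia|]. lra.
Qed.

Lemma prodR_but_nonneg n k f : (forall i, (i < n)%nat -> i <> k -> 0 <= f i) -> 0 <= prodR_but n k f.
Proof. intros H. apply prodR_nonneg. intros i Hi. destruct (Nat.eqb_spec i k); [lra|auto]. Qed.

Lemma prodR_but_div n k w N : (k < n)%nat -> N <> 0 ->
  prodR_but n k (fun i => w i / N) * N ^ (n - 1) = prodR_but n k w.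
Proof.
  intros Hk HN.
  assert (Hfull : forall m, prodR m (fun i => w i / N) * N ^ m = prodR m w).
  { induction m; simpl; [lra|]. rewrite <- IHm. field. auto. }
  unfold prodR_but. revert Hk. induction n; intros Hk; [lia|]. simpl prodR. destruct (Nat.eq_dec k n).
  - subst. rewrite Nat.eqb_refl. replace (S n - 1)%nat with n by lia.
    rewrite (prodR_ext n (fun i => if Nat.eqb i n then 1 else w i / N) (fun i => w i / N)),
      (prodR_ext n (fun i => if Nat.eqb i n then 1 else w i) w), <- Hfull; [lra| |];
      intros i Hi; destruct (Nat.eqb_spec i n); auto; lia.
  - destruct (Nat.eqb_spec n k); [lia|]. replace (S n - 1)%nat with (S (n - 1)) by lia. simpl pow.
    rewrite <- IHn by lia. field. auto.
Qed.

Fixpoint digit (N p m : nat) : nat :=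
  match p with O => (m mod N)%nat | S p' => digit N p' (m / N)%nat end.

Lemma digits_encode N L (P : nat -> nat -> Prop) : (0 < N)%nat ->
  (forall p, (p < L)%nat -> exists d, (d < N)%nat /\ P p d) ->
  exists m, (m < N ^ L)%nat /\ forall p, (p < L)%nat -> P p (digit N p m).
Proof.
  intros HN. revert P. induction L; intros P HP.
  - exists 0%nat. simpl. split; [lia|]. intros; lia.
  - destruct (HP 0%nat ltac:(lia)) as [d0 [Hd0 Pd0]].
    destruct (IHL (fun p d => P (S p) d)) as [m [Hm Pm]]; [intros p Hp; apply HP; lia|].
    exists (d0 + m * N)%nat. split.
    + simpl. assert (m <= N ^ L - 1)%nat by lia. assert (1 <= N ^ L)%nat by lia. nia.
    + intros [|p] Hp; simpl.
      * rewrite Nat.Div0.mod_add, Nat.mod_small; auto.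
      * rewrite Nat.div_add, Nat.div_small by lia. apply Pm. lia.
Qed.

Lemma grid_index_exists N h y : (0 < N)%nat -> 0 <= h -> 0 <= y <= INR N * h ->
  exists e, (e < N)%nat /\ INR e * h <= y <= INR (S e) * h.
Proof.
  intros HN Hh. induction N; [lia|]. intros Hy. destruct (Nat.eq_dec N 0).
  - subst. exists 0%nat. split; [lia|]. simpl in *. lra.
  - destruct (Rle_dec y (INR N * h)).
    + destruct IHN as [e [He He']]; [lia|lra|]. exists e; split; auto.
    + exists N. split; [lia|]. lra.
Qed.

(* The coordinates [i <> k] of [0 .. n-1], renumbered [0 .. n-2]. *)
Definition skip_index (k i : nat) : nat := if Nat.ltb i k then i else (i - 1)%nat.
Definition unskip_index (k p : nat) : nat := if Nat.ltb p k then p else S p.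

Lemma skip_index_spec n k i : (k < n)%nat -> (i < n)%nat -> i <> k ->
  (skip_index k i < n - 1)%nat /\ unskip_index k (skip_index k i) = i.
Proof.
  intros. unfold skip_index, unskip_index.
  destruct (Nat.ltb_spec i k); [destruct (Nat.ltb_spec i k) | destruct (Nat.ltb_spec (i - 1) k)]; split; lia.
Qed.

Lemma unskip_index_spec n k p : (p < n - 1)%nat -> (unskip_index k p < n)%nat /\ unskip_index k p <> k.
Proof. intros. unfold unskip_index. destruct (Nat.ltb_spec p k); lia. Qed.

Fixpoint argmax (w : nat -> R) (m : nat) : nat :=
  match m with
  | O => O
  | S m' => let a := argmax w m' in if Rle_dec (w m') (w a) then a else m'
  end.

Lemma argmax_spec w m : (0 < m)%nat -> (argmax w m < m)%nat /\ forall i, (i < m)%nat -> w i <= w (argmax w m).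
Proof.
  induction m as [|m IH]; intros Hm; [lia|]. destruct (Nat.eq_dec m 0).
  - subst. simpl. destruct Rle_dec; split; try lia; intros i Hi; replace i with 0%nat by lia; lra.
  - destruct (IH ltac:(lia)) as [H1 H2]. simpl. destruct Rle_dec.
    + split; [lia|]. intros i Hi. destruct (Nat.eq_dec i m); [subst; auto | apply H2; lia].
    + split; [lia|]. intros i Hi. destruct (Nat.eq_dec i m); [subst; lra|].
      specialize (H2 i ltac:(lia)). lra.
Qed.

Lemma sum_f_R0_sumR f m : sum_f_R0 f m = sumR (S m) f.
Proof. induction m; simpl; [lra|]. rewrite IHm. simpl. lra. Qed.

Lemma sumR_le_infinite_sum f l K : (forall i, 0 <= f i) -> infinite_sum f l -> sumR K f <= l.
Proof.
  intros Hf Hs. apply Rnot_lt_le. intros Hlt.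
  destruct (Hs (sumR K f - l) ltac:(lra)) as [N HN]. specialize (HN (N + K)%nat ltac:(lia)).
  rewrite sum_f_R0_sumR in HN. unfold Rdist in HN. apply Rabs_def2 in HN.
  assert (sumR K f <= sumR (S (N + K)) f) by (apply sumR_le_length; auto; lia). lra.
Qed.

Lemma infinite_sum_le f L B : infinite_sum f L -> (forall K, sumR K f <= B) -> L <= B.
Proof.
  intros Hs HB. apply Rnot_lt_le. intros Hlt.
  destruct (Hs (L - B) ltac:(lra)) as [N HN]. specialize (HN N (le_n _)).
  rewrite sum_f_R0_sumR in HN. unfold Rdist in HN. apply Rabs_def2 in HN. specialize (HB (S N)). lra.
Qed.

Lemma infinite_sum_of_bounded f B : (forall i, 0 <= f i) -> (forall K, sumR K f <= B) ->
  exists L, infinite_sum f L /\ L <= B.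
Proof.
  intros Hf HB. destruct (growing_cv (fun m => sumR (S m) f)) as [L HL].
  - intros m. specialize (Hf (S m)). simpl in *. lra.
  - exists B. intros y [m ->]. apply HB.
  - assert (Hs : infinite_sum f L).
    { intros e He. destruct (HL e He) as [N HN]. exists N. intros m Hm. rewrite sum_f_R0_sumR. auto. }
    exists L. split; [exact Hs|]. apply (infinite_sum_le f); auto.
Qed.

Lemma infinite_sums_of_bounded f g B : (forall i, 0 <= f i) -> (forall i, 0 <= g i) ->
  (forall K, sumR K f + sumR K g <= B) ->
  exists L1 L2, infinite_sum f L1 /\ infinite_sum g L2 /\ L1 + L2 <= B.
Proof.
  intros Hf Hg HB.
  destruct (infinite_sum_of_bounded f B Hf) as [L1 [H1 _]].
  { intros K. specialize (HB K). pose proof (sumR_nonneg K g (fun i _ => Hg i)). lra. }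
  destruct (infinite_sum_of_bounded g B Hg) as [L2 [H2 _]].
  { intros K. specialize (HB K). pose proof (sumR_nonneg K f (fun i _ => Hf i)). lra. }
  exists L1, L2. repeat split; auto.
  apply (infinite_sum_le (fun i => f i + g i)).
  - intros e He. destruct (CV_plus _ _ _ _ H1 H2 e He) as [N HN]. exists N. intros m Hm.
    rewrite plus_sum. apply HN, Hm.
  - intros K. rewrite sumR_plus. apply HB.
Qed.

Lemma infinite_sum_single V : infinite_sum (fun j => if Nat.eqb j 0 then V else 0) V.
Proof.
  intros e He. exists 0%nat. intros m _. rewrite sum_f_R0_sumR. unfold Rdist.
  replace (sumR (S m) (fun j => if Nat.eqb j 0 then V else 0)) with V; [rewrite Rminus_diag, Rabs_R0; lra|].
  induction m; simpl sumR in *; [simpl; lra|]. rewrite <- IHm. simpl. lra.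
Qed.

Lemma Rabs_le_inv x M : Rabs x <= M -> - M <= x <= M.
Proof. unfold Rabs; destruct (Rcase_abs x); intros; lra. Qed.

(** * Outer volume *)

Section OuterVolume.

Variable n : nat.
Hypothesis n_pos : (0 < n)%nat.

Definition bounded (S : (nat -> R) -> Prop) : Prop :=
  exists M, forall x, S x -> forall i, (i < n)%nat -> Rabs (x i) <= M.

(* A junk value unless [S] has a volume; every bounded [S] has one (is_volume_vol). *)
Definition vol (S : (nat -> R) -> Prop) : R := epsilon (inhabits 0) (is_volume n S).

Lemma bounded_sub S T : bounded S -> (forall x, T x -> S x) -> bounded T.
Proof. intros [M HM] H. exists M. intros x Hx. apply HM, H, Hx. Qed.

Lemma bounded_union S T : bounded S -> bounded T -> bounded (fun x => S x \/ T x).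
Proof.
  intros [M1 H1] [M2 H2]. exists (Rmax M1 M2). intros x [Hx|Hx] i Hi.
  - eapply Rle_trans; [apply H1; auto | apply Rmax_l].
  - eapply Rle_trans; [apply H2; auto | apply Rmax_r].
Qed.

Lemma box_vol_nonneg a b : (forall i, (i < n)%nat -> a i <= b i) -> 0 <= box_vol n a b.
Proof. intros H. apply prodR_nonneg. intros i Hi. specialize (H i Hi). lra. Qed.

Lemma box_cover_sum_nonneg S s : box_cover_sum n S s -> 0 <= s.
Proof.
  intros [a [b [Hv [_ Hs]]]]. apply (sumR_le_infinite_sum _ _ 0) in Hs; auto.
  intros j. apply box_vol_nonneg, Hv.
Qed.

Lemma box_cover_sum_exists S : bounded S -> exists s, box_cover_sum n S s.
Proof.
  intros [M HM]. set (M' := Rabs M).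
  exists (box_vol n (fun _ => - M') (fun _ => M')).
  exists (fun j => if Nat.eqb j 0 then (fun _ => - M') else (fun _ => 0)).
  exists (fun j => if Nat.eqb j 0 then (fun _ => M') else (fun _ => 0)).
  assert (0 <= M') by apply Rabs_pos.
  split; [|split].
  - intros j i _. destruct (Nat.eqb j 0); lra.
  - intros x Hx. exists 0%nat. intros i Hi. specialize (HM x Hx i Hi).
    pose proof (Rle_abs M). apply Rabs_le_inv in HM. simpl. unfold M'. lra.
  - replace (fun j => box_vol n _ _) with (fun j => if Nat.eqb j 0 then box_vol n (fun _ => - M') (fun _ => M') else 0);
      [apply infinite_sum_single|].
    extensionality j. destruct (Nat.eqb j 0); auto.
    unfold box_vol. rewrite <- (prodR_0 n n_pos). apply prodR_ext. intros. lra.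
Qed.

Lemma is_volume_vol S : bounded S -> is_volume n S (vol S).
Proof.
  intros Hb. unfold vol. apply epsilon_spec.
  destruct (box_cover_sum_exists S Hb) as [s0 Hs0].
  destruct (completeness (fun y => exists s, box_cover_sum n S s /\ y = - s)) as [m [Hub Hlub]].
  - exists 0. intros y [s [Hs ->]]. pose proof (box_cover_sum_nonneg _ _ Hs). lra.
  - exists (- s0). eauto.
  - exists (- m). split.
    + intros s Hs. assert (- s <= m) by (apply Hub; eauto). lra.
    + intros w Hw. assert (m <= - w); [|lra].
      apply Hlub. intros y [s [Hs ->]]. specialize (Hw s Hs). lra.
Qed.

Lemma vol_le_cover S s : bounded S -> box_cover_sum n S s -> vol S <= s.
Proof. intros Hb Hs. apply (proj1 (is_volume_vol S Hb)), Hs. Qed.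

Lemma vol_approx S e : bounded S -> 0 < e -> exists s, box_cover_sum n S s /\ s < vol S + e.
Proof.
  intros Hb He. apply NNPP. intros Hno.
  assert (vol S + e <= vol S); [|lra].
  apply (proj2 (is_volume_vol S Hb)). intros s Hs. apply Rnot_lt_le. intros Hlt.
  apply Hno. exists s. split; auto.
Qed.

Lemma vol_ext S T : (forall x, S x <-> T x) -> vol S = vol T.
Proof. intros H. replace T with S; auto. extensionality x. apply propositional_extensionality, H. Qed.

Lemma vol_le_of_covers S T : bounded S -> bounded T ->
  (forall s, box_cover_sum n S s -> box_cover_sum n T s) -> vol T <= vol S.
Proof.
  intros HS HT H. apply le_epsilon. intros e He.
  destruct (vol_approx S e HS He) as [s [Hs Hse]].
  pose proof (vol_le_cover T s HT (H s Hs)). lra.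
Qed.

Lemma vol_mono S T : bounded S -> (forall x, T x -> S x) -> vol T <= vol S.
Proof.
  intros HS Hsub. apply vol_le_of_covers; [auto | eapply bounded_sub; eauto |].
  intros s [a [b [Hv [Hc Hsum]]]]. exists a, b. split; [exact Hv | split; [|exact Hsum]].
  intros x Hx. apply Hc, Hsub, Hx.
Qed.

Lemma box_cover_sum_of_blocks S T (A B : nat -> nat -> nat -> R) L : (T <> 0)%nat ->
  (forall j m i, (i < n)%nat -> A j m i <= B j m i) ->
  (forall x, S x -> exists j m, (m < T)%nat /\ in_box n (A j m) (B j m) x) ->
  infinite_sum (fun k => box_vol n (A (k / T) (k mod T))%nat (B (k / T) (k mod T))%nat) L ->
  box_cover_sum n S L.
Proof.
  intros HT Hv Hc HL. exists (fun k => A (k / T) (k mod T))%nat, (fun k => B (k / T) (k mod T))%nat.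
  repeat split; auto. intros x Hx. destruct (Hc x Hx) as [j [m [Hm Hin]]].
  exists (j * T + m)%nat. rewrite block_index_div, block_index_mod; auto.
Qed.

Lemma sumR_blocks_le T (g : nat -> nat -> R) B : (T <> 0)%nat -> (forall j m, 0 <= g j m) ->
  (forall J, sumR J (fun j => sumR T (g j)) <= B) -> forall K, sumR K (fun k => g (k / T) (k mod T))%nat <= B.
Proof.
  intros HT Hg HB K. rewrite <- (HB K), <- sumR_div_mod by auto.
  apply sumR_le_length; auto. destruct T; lia.
Qed.

Lemma cover_of_blocks S T (A B : nat -> nat -> nat -> R) bound : (T <> 0)%nat ->
  (forall j m i, (i < n)%nat -> A j m i <= B j m i) ->
  (forall x, S x -> exists j m, (m < T)%nat /\ in_box n (A j m) (B j m) x) ->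
  (forall J, sumR J (fun j => sumR T (fun m => box_vol n (A j m) (B j m))) <= bound) ->
  exists s, box_cover_sum n S s /\ s <= bound.
Proof.
  intros HT Hv Hc Hb.
  destruct (infinite_sum_of_bounded (fun k => box_vol n (A (k / T) (k mod T))%nat (B (k / T) (k mod T))%nat) bound)
    as [L [HL HLb]].
  - intros k. apply box_vol_nonneg; auto.
  - apply (sumR_blocks_le T (fun j m => box_vol n (A j m) (B j m))); auto.
    intros j m. apply box_vol_nonneg; auto.
  - exists L. split; auto. apply (box_cover_sum_of_blocks S T A B); auto.
Qed.

Lemma covers_of_blocks S1 S2 T (A1 B1 A2 B2 : nat -> nat -> nat -> R) bound : (T <> 0)%nat ->
  (forall j m i, (i < n)%nat -> A1 j m i <= B1 j m i) ->
  (forall j m i, (i < n)%nat -> A2 j m i <= B2 j m i) ->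
  (forall x, S1 x -> exists j m, (m < T)%nat /\ in_box n (A1 j m) (B1 j m) x) ->
  (forall x, S2 x -> exists j m, (m < T)%nat /\ in_box n (A2 j m) (B2 j m) x) ->
  (forall J, sumR J (fun j => sumR T (fun m => box_vol n (A1 j m) (B1 j m) + box_vol n (A2 j m) (B2 j m))) <= bound) ->
  exists s1 s2, box_cover_sum n S1 s1 /\ box_cover_sum n S2 s2 /\ s1 + s2 <= bound.
Proof.
  intros HT Hv1 Hv2 Hc1 Hc2 Hb.
  destruct (infinite_sums_of_bounded (fun k => box_vol n (A1 (k / T) (k mod T))%nat (B1 (k / T) (k mod T))%nat)
              (fun k => box_vol n (A2 (k / T) (k mod T))%nat (B2 (k / T) (k mod T))%nat) bound)
    as [L1 [L2 [HL1 [HL2 HLb]]]].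
  - intros k. apply box_vol_nonneg; auto.
  - intros k. apply box_vol_nonneg; auto.
  - intros K. rewrite <- sumR_plus.
    apply (sumR_blocks_le T (fun j m => box_vol n (A1 j m) (B1 j m) + box_vol n (A2 j m) (B2 j m))); auto.
    intros j m. apply Rplus_le_le_0_compat; apply box_vol_nonneg; auto.
  - exists L1, L2. split; [|split; [|exact HLb]].
    + apply (box_cover_sum_of_blocks S1 T A1 B1); auto.
    + apply (box_cover_sum_of_blocks S2 T A2 B2); auto.
Qed.

Lemma vol_union_le S T : bounded S -> bounded T -> vol (fun x => S x \/ T x) <= vol S + vol T.
Proof.
  intros HS HT. apply le_epsilon. intros e He.
  destruct (vol_approx S (e/2) HS ltac:(lra)) as [sS [[a1 [b1 [Hv1 [Hc1 Hs1]]]] HsS]].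
  destruct (vol_approx T (e/2) HT ltac:(lra)) as [sT [[a2 [b2 [Hv2 [Hc2 Hs2]]]] HsT]].
  destruct (cover_of_blocks (fun x => S x \/ T x) 2 (fun j m => if Nat.eqb m 0 then a1 j else a2 j)
    (fun j m => if Nat.eqb m 0 then b1 j else b2 j) (sS + sT)) as [s [Hs Hsb]].
  - lia.
  - intros j m i Hi. destruct (Nat.eqb m 0); auto.
  - intros x [Hx|Hx].
    + destruct (Hc1 x Hx) as [j Hj]. exists j, 0%nat. auto.
    + destruct (Hc2 x Hx) as [j Hj]. exists j, 1%nat. auto.
  - intros J. simpl. rewrite sumR_plus.
    pose proof (sumR_le_infinite_sum _ _ J (fun j => box_vol_nonneg _ _ (Hv1 j)) Hs1).
    pose proof (sumR_le_infinite_sum _ _ J (fun j => box_vol_nonneg _ _ (Hv2 j)) Hs2).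
    rewrite (sumR_ext J _ (fun j => box_vol n (a1 j) (b1 j))) by (intros; lra). lra.
  - pose proof (vol_le_cover _ s (bounded_union S T HS HT) Hs). lra.
Qed.

Definition set_coord (k : nat) (t : R) (a : nat -> R) : nat -> R := fun i => if Nat.eqb i k then t else a i.

Lemma prodR_but_ext k f g : (forall i, (i < n)%nat -> i <> k -> f i = g i) -> prodR_but n k f = prodR_but n k g.
Proof. intros H. apply prodR_ext. intros i Hi. destruct (Nat.eqb_spec i k); auto. Qed.

Lemma box_vol_set_coord k s u a b : (k < n)%nat ->
  box_vol n (set_coord k s a) (set_coord k u b) = (u - s) * prodR_but n k (fun i => b i - a i).
Proof.
  intros Hk. unfold box_vol. rewrite (prodR_extract n k) by auto. unfold set_coord. rewrite Nat.eqb_refl.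
  f_equal. apply prodR_but_ext. intros i _ Hik. apply Nat.eqb_neq in Hik. rewrite Hik. auto.
Qed.

Lemma in_box_set_coord k s u a b x : s <= x k <= u ->
  (forall i, (i < n)%nat -> i <> k -> a i <= x i <= b i) -> in_box n (set_coord k s a) (set_coord k u b) x.
Proof. intros Hxk H i Hi. unfold set_coord. destruct (Nat.eqb_spec i k); [subst; auto | auto]. Qed.

Definition clamp (lo hi x : R) : R := Rmax lo (Rmin hi x).

Lemma clamp_bounds lo hi x : lo <= hi -> lo <= clamp lo hi x <= hi.
Proof. unfold clamp, Rmax, Rmin. repeat destruct Rle_dec; lra. Qed.

Lemma clamp_id lo hi x : lo <= x <= hi -> clamp lo hi x = x.
Proof. unfold clamp, Rmax, Rmin. repeat destruct Rle_dec; lra. Qed.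

Lemma clamp_le_compat lo hi x y : x <= y -> clamp lo hi x <= clamp lo hi y.
Proof. unfold clamp, Rmax, Rmin. repeat destruct Rle_dec; lra. Qed.

Lemma clamp_sub_le lo hi x y : lo <= hi -> x <= y -> clamp lo hi y - clamp lo hi x <= y - x.
Proof. unfold clamp, Rmax, Rmin. repeat destruct Rle_dec; lra. Qed.

Lemma clamp_ge lo hi x y : lo <= x <= hi -> x <= y -> x <= clamp lo hi y.
Proof. intros Hx Hy. rewrite <- (clamp_id lo hi x Hx). apply clamp_le_compat, Hy. Qed.

Lemma clamp_le lo hi x y : lo <= x <= hi -> y <= x -> clamp lo hi y <= x.
Proof. intros Hx Hy. rewrite <- (clamp_id lo hi x Hx). apply clamp_le_compat, Hy. Qed.

Lemma vol_cut_le k t E : (k < n)%nat -> bounded E ->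
  vol (fun x => E x /\ x k <= t) + vol (fun x => E x /\ t <= x k) <= vol E.
Proof.
  intros Hk HE. apply le_epsilon. intros e He.
  destruct (vol_approx E e HE He) as [s [[a [b [Hv [Hc Hs]]]] Hse]].
  set (tau j := clamp (a j k) (b j k) t).
  destruct (covers_of_blocks (fun x => E x /\ x k <= t) (fun x => E x /\ t <= x k) 1
     (fun j _ => set_coord k (a j k) (a j)) (fun j _ => set_coord k (tau j) (b j))
     (fun j _ => set_coord k (tau j) (a j)) (fun j _ => set_coord k (b j k) (b j)) s)
    as [s1 [s2 [H1 [H2 H12]]]].
  - lia.
  - intros j _ i Hi. unfold set_coord. destruct (Nat.eqb_spec i k); [subst; apply clamp_bounds|]; auto.
  - intros j _ i Hi. unfold set_coord. destruct (Nat.eqb_spec i k); [subst; apply clamp_bounds|]; auto.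
  - intros x [Hx Hxt]. destruct (Hc x Hx) as [j Hj]. exists j, 0%nat. split; [lia|].
    apply in_box_set_coord; auto. split; [apply Hj, Hk | apply clamp_ge; auto].
  - intros x [Hx Hxt]. destruct (Hc x Hx) as [j Hj]. exists j, 0%nat. split; [lia|].
    apply in_box_set_coord; auto. split; [apply clamp_le; auto | apply Hj, Hk].
  - intros J. simpl. eapply Rle_trans; [|apply (sumR_le_infinite_sum _ _ J) in Hs; [exact Hs|]].
    + apply Req_le, sumR_ext. intros j _.
      rewrite !box_vol_set_coord by auto. unfold box_vol. rewrite (prodR_extract n k) by auto. lra.
    + intros j. apply box_vol_nonneg; auto.
  - assert (bounded (fun x => E x /\ x k <= t)) by (apply (bounded_sub E); [|intros x []]; auto).
    assert (bounded (fun x => E x /\ t <= x k)) by (apply (bounded_sub E); [|intros x []]; auto).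
    pose proof (vol_le_cover _ _ H H1). pose proof (vol_le_cover _ _ H0 H2). lra.
Qed.

Definition reflect (k : nat) (t : R) (x : nat -> R) : nat -> R := fun i => if Nat.eqb i k then t - x i else x i.

Lemma reflect_involutive k t x : reflect k t (reflect k t x) = x.
Proof. extensionality i. unfold reflect. destruct (Nat.eqb i k); lra. Qed.

Lemma bounded_reflect k t S : bounded S -> bounded (fun x => S (reflect k t x)).
Proof.
  intros [M HM]. exists (M + Rabs t). intros x Hx i Hi. specialize (HM _ Hx i Hi). unfold reflect in HM.
  pose proof (Rabs_pos t). destruct (Nat.eqb i k); [|lra].
  revert HM. unfold Rabs. repeat destruct Rcase_abs; lra.
Qed.

Lemma vol_reflect_le k t S : bounded S -> vol (fun x => S (reflect k t x)) <= vol S.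
Proof.
  intros HS. apply vol_le_of_covers; auto using bounded_reflect.
  intros s [a [b [Hv [Hc Hs]]]].
  exists (fun j i => if Nat.eqb i k then t - b j i else a j i), (fun j i => if Nat.eqb i k then t - a j i else b j i).
  split; [|split].
  - intros j i Hi. specialize (Hv j i Hi). destruct (Nat.eqb i k); lra.
  - intros x Hx. destruct (Hc _ Hx) as [j Hj]. exists j. intros i Hi. specialize (Hj i Hi). unfold reflect in Hj.
    destruct (Nat.eqb i k); lra.
  - replace (fun j => box_vol n _ _) with (fun j => box_vol n (a j) (b j)); auto.
    extensionality j. apply prodR_ext. intros i _. destruct (Nat.eqb i k); lra.
Qed.

Lemma vol_reflect k t S : bounded S -> vol (fun x => S (reflect k t x)) = vol S.
Proof.
  intros HS. apply Rle_antisym; [apply vol_reflect_le; auto|].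
  pose proof (vol_reflect_le k t (fun x => S (reflect k t x)) (bounded_reflect k t S HS)) as H. cbv beta in H.
  rewrite (vol_ext (fun x => S (reflect k t (reflect k t x))) S) in H; auto.
  intros x. rewrite reflect_involutive. tauto.
Qed.

(** * Caratheodory measurability *)

(* Tested against bounded sets only. *)
Definition measurable (M : (nat -> R) -> Prop) : Prop :=
  forall E, bounded E -> vol (fun x => E x /\ M x) + vol (fun x => E x /\ ~ M x) <= vol E.

Lemma measurable_ext M M' : (forall x, M x <-> M' x) -> measurable M -> measurable M'.
Proof.
  intros H HM E HE.
  rewrite (vol_ext (fun x => E x /\ M' x) (fun x => E x /\ M x)) by (intros x; rewrite (H x); tauto).
  rewrite (vol_ext (fun x => E x /\ ~ M' x) (fun x => E x /\ ~ M x)) by (intros x; rewrite (H x); tauto).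
  apply HM; auto.
Qed.

Lemma measurable_halfspace k t : (k < n)%nat -> measurable (fun x => x k <= t).
Proof.
  intros Hk E HE. pose proof (vol_cut_le k t E Hk HE).
  assert (vol (fun x => E x /\ ~ x k <= t) <= vol (fun x => E x /\ t <= x k)); [|lra].
  apply vol_mono; [apply (bounded_sub E); [|intros x []]; auto |].
  intros x [Hx Hy]. split; auto. lra.
Qed.

Lemma vol_split_le E M : bounded E -> vol E <= vol (fun x => E x /\ M x) + vol (fun x => E x /\ ~ M x).
Proof.
  intros HE. eapply Rle_trans; [|apply vol_union_le; apply (bounded_sub E); auto; intros x []; auto].
  apply vol_mono.
  - apply bounded_union; apply (bounded_sub E); auto; intros x []; auto.
  - intros x Hx. destruct (classic (M x)); tauto.
Qed.

Lemma measurable_inter A B : measurable A -> measurable B -> measurable (fun x => A x /\ B x).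
Proof.
  intros HA HB E HE.
  assert (HEA : bounded (fun x => E x /\ A x)) by (apply (bounded_sub E); [|intros x []]; auto).
  pose proof (HA E HE). pose proof (HB _ HEA).
  rewrite (vol_ext (fun x => E x /\ A x /\ B x) (fun x => (E x /\ A x) /\ B x)) by tauto.
  assert (vol (fun x => E x /\ ~ (A x /\ B x)) <=
          vol (fun x => (E x /\ A x) /\ ~ B x) + vol (fun x => E x /\ ~ A x)); [|lra].
  eapply Rle_trans; [|apply vol_union_le].
  - apply vol_mono.
    + apply bounded_union; apply (bounded_sub E); auto; intros x; tauto.
    + intros x [Hx Hn']. destruct (classic (A x)); [left|right]; tauto.
  - apply (bounded_sub E); auto; intros x; tauto.
  - apply (bounded_sub E); auto; intros x; tauto.
Qed.

Lemma vol_union_inter_ge P Q : measurable Q -> bounded P -> bounded Q ->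
  vol P + vol Q <= vol (fun x => P x \/ Q x) + vol (fun x => P x /\ Q x).
Proof.
  intros HQ HP HQb.
  pose proof (vol_split_le P Q HP) as H.
  pose proof (HQ _ (bounded_union P Q HP HQb)) as H0. cbv beta in H0.
  rewrite (vol_ext (fun x => (P x \/ Q x) /\ Q x) Q) in H0 by tauto.
  rewrite (vol_ext (fun x => (P x \/ Q x) /\ ~ Q x) (fun x => P x /\ ~ Q x)) in H0 by tauto.
  lra.
Qed.

(** * Measurability of l1-balls *)

Lemma l1ball_iff c c' rho x y : (forall i, (i < n)%nat -> Rabs (x i - c i) = Rabs (y i - c' i)) ->
  (l1ball n c rho x <-> l1ball n c' rho y).
Proof. intros H. unfold l1ball, norm1. rewrite (sumR_ext n _ _ H). tauto. Qed.

Lemma l1ball_closer c c' rho x y : (forall i, (i < n)%nat -> Rabs (y i - c' i) <= Rabs (x i - c i)) ->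
  l1ball n c rho x -> l1ball n c' rho y.
Proof. intros H Hb. eapply Rle_trans; [apply sumR_le, H | exact Hb]. Qed.

Section Grid.

Variables (N k : nat) (a b c : nat -> R) (rho : R).
Hypothesis N_pos : (0 < N)%nat.
Hypothesis k_lt_n : (k < n)%nat.
Hypothesis a_le_b : forall i, (i < n)%nat -> a i <= b i.

Definition grid_step (i : nat) : R := (b i - a i) / INR N.
Definition column_corner (m i : nat) : R := a i + INR (digit N (skip_index k i) m) * grid_step i.
Definition in_column (m : nat) (x : nat -> R) : Prop :=
  forall i, (i < n)%nat -> i <> k -> column_corner m i <= x i <= column_corner m i + grid_step i.
Definition column_slack : R := sumR_but n k grid_step.
Definition corner_dist (m : nat) : R := sumR_but n k (fun i => Rabs (column_corner m i - c i)).
Definition outer_radius (m : nat) : R := Rmax (rho - corner_dist m + column_slack) 0.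
Definition inner_radius (m : nat) : R := outer_radius m - 2 * column_slack.

(* Column [m] is cut along the axis [k] into three pieces: piece 0 contains the points of the
   ball, pieces 1 and 2 the other ones.  Piece 0 overlaps each of them in an interval of length
   at most [2 * column_slack]. *)
Definition piece_lo (m s : nat) : R :=
  match s with
  | O => clamp (a k) (b k) (c k - outer_radius m)
  | 1%nat => a k
  | _ => clamp (a k) (b k) (c k + inner_radius m)
  end.
Definition piece_hi (m s : nat) : R :=
  match s with
  | O => clamp (a k) (b k) (c k + outer_radius m)
  | 1%nat => clamp (a k) (b k) (c k - inner_radius m)
  | _ => b k
  end.
Definition piece_lo_corner (m s : nat) : nat -> R := set_coord k (piece_lo m s) (column_corner m).
Definition piece_hi_corner (m s : nat) : nat -> R :=
  set_coord k (piece_hi m s) (fun i => column_corner m i + grid_step i).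

Lemma grid_step_nonneg i : (i < n)%nat -> 0 <= grid_step i.
Proof.
  intros Hi. pose proof (a_le_b i Hi). apply Rmult_le_pos; [lra|].
  left. apply Rinv_0_lt_compat, lt_0_INR, N_pos.
Qed.

Lemma column_slack_nonneg : 0 <= column_slack.
Proof. apply sumR_but_nonneg. intros i Hi _. apply grid_step_nonneg, Hi. Qed.

Lemma outer_radius_nonneg m : 0 <= outer_radius m.
Proof. apply Rmax_r. Qed.

Lemma column_exists x : in_box n a b x -> exists m, (m < N ^ (n - 1))%nat /\ in_column m x.
Proof.
  intros Hx.
  destruct (digits_encode N (n - 1)
    (fun p d => INR d * grid_step (unskip_index k p) <= x (unskip_index k p) - a (unskip_index k p)
                <= INR (S d) * grid_step (unskip_index k p))) as [m [Hm Pm]]; auto.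
  - intros p Hp. destruct (unskip_index_spec n k p Hp) as [Hq _]. specialize (Hx _ Hq).
    apply grid_index_exists; auto. apply grid_step_nonneg; auto.
    unfold grid_step. split; [lra|]. field_simplify; [lra|]. apply not_0_INR. lia.
  - exists m. split; auto. intros i Hi Hik. destruct (skip_index_spec n k i k_lt_n Hi Hik) as [Hp Hq].
    specialize (Pm _ Hp). rewrite Hq, S_INR in Pm. unfold column_corner. lra.
Qed.

Lemma piece_corners_le m s i : (i < n)%nat -> piece_lo_corner m s i <= piece_hi_corner m s i.
Proof.
  intros Hi. unfold piece_lo_corner, piece_hi_corner, set_coord. destruct (Nat.eqb_spec i k).
  - subst. pose proof (a_le_b k k_lt_n). pose proof column_slack_nonneg. pose proof (outer_radius_nonneg m).
    destruct s as [|[|s]]; simpl; [apply clamp_le_compat; lra | apply clamp_bounds | apply clamp_bounds]; auto.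
  - pose proof (grid_step_nonneg i Hi). lra.
Qed.

Lemma column_dist_bounds m x : in_column m x ->
  corner_dist m - column_slack <= sumR_but n k (fun i => Rabs (x i - c i)) <= corner_dist m + column_slack.
Proof.
  intros Hx. unfold corner_dist, column_slack. rewrite <- !sumR_but_plus. split.
  - assert (sumR_but n k (fun i => Rabs (column_corner m i - c i)) <=
            sumR_but n k (fun i => Rabs (x i - c i) + grid_step i)); [|rewrite sumR_but_plus in *; lra].
    apply sumR_but_le. intros i Hi Hik. specialize (Hx i Hi Hik). revert Hx. unfold Rabs. repeat destruct Rcase_abs; lra.
  - apply sumR_but_le. intros i Hi Hik. specialize (Hx i Hi Hik). revert Hx. unfold Rabs. repeat destruct Rcase_abs; lra.
Qed.

Lemma in_piece_ball m x : in_box n a b x -> in_column m x -> l1ball n c rho x ->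
  in_box n (piece_lo_corner m 0) (piece_hi_corner m 0) x.
Proof.
  intros Hx Hc Hball. unfold l1ball, norm1 in Hball. rewrite (sumR_extract n k) in Hball by auto.
  pose proof (column_dist_bounds m x Hc).
  assert (Hr : Rabs (x k - c k) <= outer_radius m) by (eapply Rle_trans; [|apply Rmax_l]; lra).
  apply Rabs_le_inv in Hr. specialize (Hx k k_lt_n).
  apply in_box_set_coord; [simpl; split; [apply clamp_le | apply clamp_ge]; auto; lra | apply Hc].
Qed.

Lemma in_piece_not_ball m x : in_box n a b x -> in_column m x -> ~ l1ball n c rho x ->
  in_box n (piece_lo_corner m 1) (piece_hi_corner m 1) x \/ in_box n (piece_lo_corner m 2) (piece_hi_corner m 2) x.
Proof.
  intros Hx Hc Hball. unfold l1ball, norm1 in Hball. rewrite (sumR_extract n k) in Hball by auto.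
  pose proof (column_dist_bounds m x Hc). pose proof column_slack_nonneg.
  assert (Hr : inner_radius m <= Rabs (x k - c k)).
  { unfold inner_radius, outer_radius, Rmax. destruct Rle_dec; [pose proof (Rabs_pos (x k - c k)) |]; lra. }
  specialize (Hx k k_lt_n). destruct (Rle_dec (x k) (c k)).
  - left. rewrite Rabs_left1 in Hr by lra.
    apply in_box_set_coord; [simpl; split; [lra | apply clamp_ge; auto; lra] | apply Hc].
  - right. rewrite Rabs_right in Hr by lra.
    apply in_box_set_coord; [simpl; split; [apply clamp_le; auto; lra | lra] | apply Hc].
Qed.

Lemma column_vol_le m :
  sumR 3 (fun s => box_vol n (piece_lo_corner m s) (piece_hi_corner m s)) <=
  (b k - a k + 4 * column_slack) * prodR_but n k grid_step.
Proof.
  assert (Hp : forall s, box_vol n (piece_lo_corner m s) (piece_hi_corner m s) =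
                         (piece_hi m s - piece_lo m s) * prodR_but n k grid_step).
  { intros s. unfold piece_lo_corner, piece_hi_corner. rewrite box_vol_set_coord by auto.
    f_equal. apply prodR_but_ext. intros i _ _. ring. }
  simpl sumR. rewrite !Hp.
  assert (0 <= prodR_but n k grid_step) by (apply prodR_but_nonneg; intros i Hi _; apply grid_step_nonneg, Hi).
  pose proof (a_le_b k k_lt_n). pose proof column_slack_nonneg.
  assert (Hover2 : piece_hi m 0 - piece_lo m 2 <= 2 * column_slack).
  { simpl. unfold inner_radius. pose proof (clamp_sub_le (a k) (b k) (c k + (outer_radius m - 2 * column_slack))
      (c k + outer_radius m)). lra. }
  assert (Hover1 : piece_hi m 1 - piece_lo m 0 <= 2 * column_slack).
  { simpl. unfold inner_radius. pose proof (clamp_sub_le (a k) (b k) (c k - outer_radius m)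
      (c k - (outer_radius m - 2 * column_slack))). lra. }
  assert (E : piece_hi m 0 - piece_lo m 0 + (piece_hi m 1 - piece_lo m 1) + (piece_hi m 2 - piece_lo m 2) =
              b k - a k + (piece_hi m 0 - piece_lo m 2) + (piece_hi m 1 - piece_lo m 0)) by (simpl; ring).
  rewrite Rplus_0_l, <- !Rmult_plus_distr_r, E. apply Rmult_le_compat_r; lra.
Qed.

Lemma grid_vol_le : (forall i, (i < n)%nat -> b i - a i <= b k - a k) ->
  sumR (N ^ (n - 1)) (fun m => sumR 3 (fun s => box_vol n (piece_lo_corner m s) (piece_hi_corner m s)))
  <= (1 + 4 * INR (n - 1) / INR N) * box_vol n a b.
Proof.
  intros Hlong.
  eapply Rle_trans; [apply sumR_le; intros m _; apply column_vol_le|].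
  rewrite sumR_const, pow_INR.
  assert (HN : 0 < INR N) by (apply lt_0_INR, N_pos).
  pose proof (prodR_but_div n k (fun i => b i - a i) (INR N) k_lt_n ltac:(lra)) as Hdiv.
  unfold box_vol. rewrite (prodR_extract n k) by auto.
  set (P := prodR_but n k (fun i => b i - a i)) in *.
  assert (HP : 0 <= P) by (apply prodR_but_nonneg; intros i Hi _; specialize (a_le_b i Hi); lra).
  assert (Hslack : column_slack <= INR (n - 1) * ((b k - a k) / INR N)).
  { apply sumR_but_le_const; auto.
    - apply Rmult_le_pos; [specialize (a_le_b k k_lt_n); lra | left; apply Rinv_0_lt_compat; auto].
    - intros i Hi. apply Rmult_le_compat_r; [left; apply Rinv_0_lt_compat; auto | apply Hlong, Hi]. }
  replace (INR N ^ (n - 1) * ((b k - a k + 4 * column_slack) * prodR_but n k grid_step))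
    with ((b k - a k + 4 * column_slack) * P) by (rewrite <- Hdiv; unfold grid_step; ring).
  replace ((1 + 4 * INR (n - 1) / INR N) * ((b k - a k) * P))
    with ((b k - a k + 4 * (INR (n - 1) * ((b k - a k) / INR N))) * P) by (field; lra).
  apply Rmult_le_compat_r; lra.
Qed.

End Grid.

Lemma box_vol_zero : box_vol n (fun _ => 0) (fun _ => 0) = 0.
Proof. unfold box_vol. rewrite <- (prodR_0 n n_pos). apply prodR_ext. intros. lra. Qed.

(* Each box of the cover is cut into [N ^ (n - 1)] columns along its longest side [k], and each
   column into its three pieces; index [m'] stands for piece [m' mod 3] of column [m' / 3].
   The pieces of the wrong kind for a cover are replaced by the degenerate box at 0. *)
Lemma l1ball_split_cover c rho E s N : (0 < N)%nat -> box_cover_sum n E s ->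
  exists s1 s2, box_cover_sum n (fun x => E x /\ l1ball n c rho x) s1 /\
                box_cover_sum n (fun x => E x /\ ~ l1ball n c rho x) s2 /\
                s1 + s2 <= (1 + 4 * INR (n - 1) / INR N) * s.
Proof.
  intros HN [a [b [Hv [Hc Hs]]]].
  set (kk j := argmax (fun i => b j i - a j i) n).
  assert (Hkk : forall j, (kk j < n)%nat /\ forall i, (i < n)%nat -> b j i - a j i <= b j (kk j) - a j (kk j))
    by (intros j; apply argmax_spec, n_pos).
  set (lo j m' := piece_lo_corner N (kk j) (a j) (b j) c rho (m' / 3) (m' mod 3)).
  set (hi j m' := piece_hi_corner N (kk j) (a j) (b j) c rho (m' / 3) (m' mod 3)).
  set (inner (m' : nat) := Nat.eqb (m' mod 3) 0).
  set (zero := fun _ : nat => 0).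
  assert (Hpos : (0 < N ^ (n - 1))%nat) by (apply Nat.neq_0_lt_0, Nat.pow_nonzero; lia).
  destruct (covers_of_blocks (fun x => E x /\ l1ball n c rho x) (fun x => E x /\ ~ l1ball n c rho x)
    (N ^ (n - 1) * 3)
    (fun j m' => if inner m' then lo j m' else zero) (fun j m' => if inner m' then hi j m' else zero)
    (fun j m' => if inner m' then zero else lo j m') (fun j m' => if inner m' then zero else hi j m')
    ((1 + 4 * INR (n - 1) / INR N) * s)) as [s1 [s2 [H1 [H2 H12]]]].
  - lia.
  - intros j m' i Hi. destruct (inner m'); [apply piece_corners_le; auto; apply Hkk | unfold zero; lra].
  - intros j m' i Hi. destruct (inner m'); [unfold zero; lra | apply piece_corners_le; auto; apply Hkk].
  - intros x [Hx Hball]. destruct (Hc x Hx) as [j Hj].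
    destruct (column_exists N (kk j) (a j) (b j) HN (proj1 (Hkk j)) (Hv j) x Hj) as [m [Hm Hcol]].
    exists j, (m * 3 + 0)%nat. split; [lia|].
    unfold inner, lo, hi. rewrite block_index_mod, block_index_div by lia. simpl.
    apply in_piece_ball; auto. apply Hkk.
  - intros x [Hx Hball]. destruct (Hc x Hx) as [j Hj].
    destruct (column_exists N (kk j) (a j) (b j) HN (proj1 (Hkk j)) (Hv j) x Hj) as [m [Hm Hcol]].
    destruct (in_piece_not_ball N (kk j) (a j) (b j) c rho HN (proj1 (Hkk j)) (Hv j) m x Hj Hcol Hball) as [Ho|Ho].
    + exists j, (m * 3 + 1)%nat. split; [lia|].
      unfold inner, lo, hi. rewrite block_index_mod, block_index_div by lia. exact Ho.
    + exists j, (m * 3 + 2)%nat. split; [lia|].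
      unfold inner, lo, hi. rewrite block_index_mod, block_index_div by lia. exact Ho.
  - intros J.
    assert (Hd : 0 <= 4 * INR (n - 1) / INR N).
    { apply Rmult_le_pos; [pose proof (pos_INR (n - 1)); lra | left; apply Rinv_0_lt_compat, lt_0_INR; lia]. }
    eapply Rle_trans; [|apply Rmult_le_compat_l; [lra | exact (sumR_le_infinite_sum _ _ J (fun j => box_vol_nonneg _ _ (Hv j)) Hs)]].
    rewrite <- sumR_scal. apply sumR_le. intros j _. destruct (Hkk j) as [Hk Hlong].
    rewrite (sumR_ext _ _ (fun m' => box_vol n (lo j m') (hi j m'))).
    + unfold lo, hi. rewrite (sumR_div_mod (N ^ (n - 1)) 3
        (fun m s => box_vol n (piece_lo_corner N (kk j) (a j) (b j) c rho m s)
                              (piece_hi_corner N (kk j) (a j) (b j) c rho m s))) by lia.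
      apply grid_vol_le; auto.
    + intros mm _. pose proof box_vol_zero as Z. fold zero in Z. destruct (inner mm); rewrite Z; lra.
  - exists s1, s2. auto.
Qed.

Lemma measurable_l1ball c rho : measurable (l1ball n c rho).
Proof.
  intros E HE. apply le_epsilon. intros e He.
  destruct (vol_approx E (e/2) HE ltac:(lra)) as [s [Hcov Hse]].
  destruct (INR_unbounded (8 * INR (n - 1) * s / e)) as [N0 HN0].
  assert (HN : (0 < S N0)%nat) by lia.
  assert (HNr : INR N0 < INR (S N0)) by (apply lt_INR; lia).
  assert (HNpos : 0 < INR (S N0)) by (apply lt_0_INR; lia).
  destruct (l1ball_split_cover c rho E s (S N0) HN Hcov) as [s1 [s2 [H1 [H2 H12]]]].
  assert (HNe : 8 * INR (n - 1) * s < INR (S N0) * e).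
  { apply (Rmult_lt_reg_r (/ e)); [apply Rinv_0_lt_compat; lra|].
    rewrite (Rmult_assoc (INR (S N0))), Rinv_r, Rmult_1_r by lra. unfold Rdiv in HN0. exact (Rlt_trans _ _ _ HN0 HNr). }
  assert (Hfine : 4 * INR (n - 1) / INR (S N0) * s <= e / 2).
  { apply (Rmult_le_reg_r (INR (S N0))); [lra|].
    replace (4 * INR (n - 1) / INR (S N0) * s * INR (S N0)) with (4 * INR (n - 1) * s) by (field; lra). lra. }
  assert (Hin : bounded (fun x => E x /\ l1ball n c rho x)) by (apply (bounded_sub E); [|intros x []]; auto).
  assert (Hout : bounded (fun x => E x /\ ~ l1ball n c rho x)) by (apply (bounded_sub E); [|intros x []]; auto).
  pose proof (vol_le_cover _ _ Hin H1). pose proof (vol_le_cover _ _ Hout H2). nra.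
Qed.

(** * Two-point symmetrization *)

(* [reflect k s] is the reflection [x_k -> s - x_k] in the hyperplane [x_k = s/2]. *)
Lemma vol_le_of_reflection k s A D : (k < n)%nat -> bounded A -> bounded D ->
  measurable (fun x => A (reflect k s x)) ->
  (forall x, x k <= s / 2 -> A x -> D x) ->
  (forall x, x k <= s / 2 -> A (reflect k s x) -> D x) ->
  (forall x, x k <= s / 2 -> A x -> A (reflect k s x) -> D (reflect k s x)) ->
  vol A <= vol D.
Proof.
  intros Hk HA HD HmeasA HAD HsAD HAsD.
  assert (Hrk : forall x, reflect k s x k = s - x k) by (intros x; unfold reflect; rewrite Nat.eqb_refl; auto).
  set (P x := A x /\ x k <= s / 2).
  set (Q x := A (reflect k s x) /\ x k <= s / 2).
  assert (bP : bounded P) by (apply (bounded_sub A); [|intros x []]; auto).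
  assert (bQ : bounded Q).
  { apply (bounded_sub (fun x => A (reflect k s x))); [apply bounded_reflect; auto | intros x []; auto]. }
  assert (HAsplit : vol A <= vol P + vol (fun x => A x /\ s / 2 <= x k)).
  { eapply Rle_trans; [apply (vol_split_le A (fun x => x k <= s / 2)); auto|].
    apply Rplus_le_compat_l, vol_mono; [apply (bounded_sub A); [|intros x []]; auto|].
    intros x [Hx Hle]. split; auto. lra. }
  assert (HQ : vol Q = vol (fun x => A x /\ s / 2 <= x k)).
  { rewrite <- (vol_reflect k s (fun x => A x /\ s / 2 <= x k)) by (apply (bounded_sub A); [|intros x []]; auto).
    apply vol_ext. intros x. unfold Q. rewrite Hrk. split; intros []; split; auto; lra. }
  assert (HPQ : vol P + vol Q <= vol (fun x => P x \/ Q x) + vol (fun x => P x /\ Q x)).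
  { apply vol_union_inter_ge; auto.
    apply (measurable_ext (fun x => A (reflect k s x) /\ x k <= s / 2)); [intros x; unfold Q; tauto|].
    apply measurable_inter; auto. apply measurable_halfspace, Hk. }
  assert (Hunion : vol (fun x => P x \/ Q x) <= vol (fun x => D x /\ x k <= s / 2)).
  { apply vol_mono; [apply (bounded_sub D); [|intros x []]; auto|].
    intros x [[Hx Hle]|[Hx Hle]]; split; auto. }
  assert (Hinter : vol (fun x => P x /\ Q x) <= vol (fun x => D x /\ s / 2 <= x k)).
  { rewrite <- (vol_reflect k s (fun x => D x /\ s / 2 <= x k)) by (apply (bounded_sub D); [|intros x []]; auto).
    apply vol_mono; [apply (bounded_reflect k s (fun y => D y /\ s / 2 <= y k)), (bounded_sub D); [|intros x []]; auto|].
    intros x [[Hx Hle] [Hx' _]]. split; auto. rewrite Hrk. lra. }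
  pose proof (vol_cut_le k (s / 2) D Hk HD). lra.
Qed.

Lemma set_coord_eq k t a : set_coord k t a k = t.
Proof. unfold set_coord. rewrite Nat.eqb_refl. auto. Qed.

Lemma set_coord_neq k t a i : i <> k -> set_coord k t a i = a i.
Proof. intros H. unfold set_coord. apply Nat.eqb_neq in H. rewrite H. auto. Qed.

Lemma l1ball_reflect k s c c' r x : c' k = s - c k -> (forall i, (i < n)%nat -> i <> k -> c' i = c i) ->
  (l1ball n c r (reflect k s x) <-> l1ball n c' r x).
Proof.
  intros Hck Hc. apply l1ball_iff. intros i Hi. unfold reflect. destruct (Nat.eqb_spec i k).
  - subst. rewrite Hck, <- Rabs_Ropp. f_equal. ring.
  - rewrite Hc; auto.
Qed.

Lemma l1ball_move_center k c c' r x : (forall i, (i < n)%nat -> i <> k -> c' i = c i) ->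
  c' k <= c k -> x k <= (c' k + c k) / 2 -> l1ball n c r x -> l1ball n c' r x.
Proof.
  intros Hc Hle Hx. apply l1ball_closer. intros i Hi. destruct (Nat.eq_dec i k).
  - subst. unfold Rabs. repeat destruct Rcase_abs; lra.
  - rewrite Hc; auto. lra.
Qed.

Definition l1cap (c : nat -> R) (r : R) : (nat -> R) -> Prop := fun x => l1ball n origin 1 x /\ l1ball n c r x.

Lemma bounded_l1cap c r : bounded (l1cap c r).
Proof.
  exists 1. intros x [Hx _] i Hi. unfold l1ball, norm1, origin in Hx.
  pose proof (sumR_ge_term n (fun i => Rabs (x i - 0)) i (fun j _ => Rabs_pos _) Hi). cbv beta in H.
  rewrite Rminus_0_r in H. lra.
Qed.

Lemma vol_l1cap_ext c c' r : (forall i, (i < n)%nat -> c i = c' i) -> vol (l1cap c r) = vol (l1cap c' r).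
Proof.
  intros H. apply vol_ext. intros x. unfold l1cap.
  rewrite (l1ball_iff c c' r x x); [tauto|]. intros i Hi. rewrite H; auto.
Qed.

(* [c_k e_k] and [c - c_k e_k] are the images of the centres 0 and [c] under the reflection. *)
Lemma vol_l1cap_le_zero_coord k c r : (k < n)%nat -> 0 <= c k -> vol (l1cap c r) <= vol (l1cap (set_coord k 0 c) r).
Proof.
  intros Hk Hck. set (e := set_coord k (c k) origin). set (d := set_coord k 0 c).
  assert (He : forall i, (i < n)%nat -> i <> k -> e i = origin i) by (intros; apply set_coord_neq; auto).
  assert (Hd : forall i, (i < n)%nat -> i <> k -> d i = c i) by (intros; apply set_coord_neq; auto).
  assert (Hek : e k = c k) by apply set_coord_eq. assert (Hdk : d k = 0) by apply set_coord_eq.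
  assert (Hok : origin k = 0) by reflexivity.
  assert (R0 : forall x, l1ball n origin 1 (reflect k (c k) x) <-> l1ball n e 1 x)
    by (intros x; apply l1ball_reflect; auto; lra).
  assert (Rc : forall x, l1ball n c r (reflect k (c k) x) <-> l1ball n d r x)
    by (intros x; apply l1ball_reflect; auto; lra).
  assert (Rd : forall x, l1ball n d r (reflect k (c k) x) <-> l1ball n c r x)
    by (intros x; apply l1ball_reflect; auto; [lra | intros; symmetry; auto]).
  apply (vol_le_of_reflection k (c k)); auto using bounded_l1cap; unfold l1cap.
  - apply (measurable_ext (fun x => l1ball n e 1 x /\ l1ball n d r x)).
    + intros x. rewrite R0, Rc. tauto.
    + apply measurable_inter; apply measurable_l1ball.
  - intros x Hx [H0 Hc]. split; auto. apply (l1ball_move_center k c); auto; lra.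
  - intros x Hx. rewrite R0, Rc. intros [H0 Hc]. split; auto.
    apply (l1ball_move_center k e); auto; [intros; rewrite He; auto | lra | lra].
  - intros x _ [_ Hc] [H0 _]. split; auto. apply Rd, Hc.
Qed.

Definition zero_coords_upto (m : nat) (c : nat -> R) : nat -> R :=
  fun i => if andb (Nat.ltb 0 i) (Nat.leb i m) then 0 else c i.

Lemma vol_l1cap_le_zero_coords_upto c r : (forall i, (i < n)%nat -> 0 <= c i) ->
  forall m, vol (l1cap c r) <= vol (l1cap (zero_coords_upto m c) r).
Proof.
  intros Hc m. induction m.
  - apply Req_le, vol_l1cap_ext. intros i _. unfold zero_coords_upto.
    destruct (Nat.ltb_spec 0 i), (Nat.leb_spec i 0); simpl; auto; lia.
  - eapply Rle_trans; [exact IHm|]. destruct (Nat.lt_ge_cases (S m) n).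
    + eapply Rle_trans; [apply (vol_l1cap_le_zero_coord (S m)); auto|].
      * unfold zero_coords_upto. destruct (Nat.ltb_spec 0 (S m)), (Nat.leb_spec (S m) m); simpl; try lia. auto.
      * apply Req_le, vol_l1cap_ext. intros i _. unfold set_coord, zero_coords_upto.
        destruct (Nat.eqb_spec i (S m)), (Nat.ltb_spec 0 i), (Nat.leb_spec i m), (Nat.leb_spec i (S m));
          simpl; auto; lia.
    + apply Req_le, vol_l1cap_ext. intros i Hi. unfold zero_coords_upto.
      destruct (Nat.ltb_spec 0 i), (Nat.leb_spec i m), (Nat.leb_spec i (S m)); simpl; auto; lia.
Qed.

End OuterVolume.

Theorem mainTheorem9 (n : nat) (r : R) (c : nat -> R) :
  (0 < n)%nat -> 0 < r -> (forall i, (i < n)%nat -> 0 <= c i) ->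
  let c' := fun i => if Nat.eqb i 0 then c 0%nat else 0 in
  exists v1 v2 : R,
    is_volume n (fun x => l1ball n origin 1 x /\ l1ball n c r x) v1 /\
    is_volume n (fun x => l1ball n origin 1 x /\ l1ball n c' r x) v2 /\
    v1 <= v2.
Proof.
  intros Hn _ Hc c'.
  exists (vol n (l1cap n c r)), (vol n (l1cap n c' r)).
  split; [|split].
  - apply is_volume_vol, bounded_l1cap; auto.
  - apply is_volume_vol, bounded_l1cap; auto.
  - rewrite (vol_l1cap_ext n c' (zero_coords_upto (n - 1) c) r).
    + apply vol_l1cap_le_zero_coords_upto; auto.
    + intros i Hi. unfold c', zero_coords_upto.
      destruct (Nat.eqb_spec i 0), (Nat.ltb_spec 0 i), (Nat.leb_spec i (n - 1)); simpl; subst; auto; lia.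
Qed.
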